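(* Let $G$ be a finite group. The graph $\mathcal{P}^*(G)/\mathtt{T}$ is a tame quotient of $\mathcal{P}^*(G)$ if and only if, for all $x,y\in G\setminus\{1\}$, $x\mathtt{T}y$ implies $x\mathtt{N}y$.
   Context: The power graph $\mathcal{P}(G)$ has vertex set $G$, distinct $x,y$ adjacent iff one is a positive integer power of the other; $\mathcal{P}^*(G)$ is its subgraph induced on $G\setminus\{1\}$. $x\mathtt{N}y$ (closed twins) iff $x,y$ have the same closed neighbourhood; $x\mathtt{O}y$ (open twins) iff they have the same open neighbourhood; $x\mathtt{T}y$ (twins) iff $x\mathtt{N}y$ or $x\mathtt{O}y$ (an equivalence relation). For a graph $\Gamma$ and equivalence $\sim$ on its vertices, $\Gamma/\sim$ has vertex set the classes, classes joined iff some representatives are joined; the quotient is tame if $[x]=[y]$ implies $x$ and $y$ are joined by a path in $\Gamma$. *)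

From mathcomp Require Import all_boot all_fingroup.
Set Implicit Arguments. Unset Strict Implicit. Unset Printing Implicit Defensive.
Local Open Scope group_scope.

Section Graphs.
Variables (T : Type) (V : T -> Prop) (adj : T -> T -> Prop).

Definition open_twins (x y : T) : Prop :=
  forall z, V z -> (adj x z <-> adj y z).

Definition closed_twins (x y : T) : Prop :=
  forall z, V z -> ((z = x \/ adj x z) <-> (z = y \/ adj y z)).

(* the twin relation T = N ∪ O *)
Definition twins (x y : T) : Prop := closed_twins x y \/ open_twins x y.

Inductive walk : T -> T -> Prop :=
  | walk_nil x : V x -> walk x x
  | walk_cons x y z : adj x y -> walk y z -> walk x z.

Definition joined (x y : T) : Prop := V x /\ walk x y.

Definition tame_quotient (equiv : T -> T -> Prop) : Prop :=
  forall x y, V x -> V y -> equiv x y -> joined x y.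
End Graphs.

(** The power graph P(G) with G = the whole finite group gT, and P*(G). *)
Section PowerGraph.
Variable gT : finGroupType.

Definition power_adj (x y : gT) : Prop :=
  x <> y /\ ((exists n : nat, (0 < n)%N /\ y = x ^+ n) \/
             (exists n : nat, (0 < n)%N /\ x = y ^+ n)).

Definition pstar_vertex (x : gT) : Prop := x <> 1.

Definition pstar_adj (x y : gT) : Prop :=
  pstar_vertex x /\ pstar_vertex y /\ power_adj x y.
End PowerGraph.

(* Distinct open twins x, y of P*(G) are isolated vertices, so a tame quotient
   can only identify closed twins.  Indeed x, y are not adjacent, so neither is
   a power of the other; if x^-1 <> x then x^-1 would be a neighbour of x, hence
   of y, making one of x, y a power of the other.  So x and y are involutions,
   and a common neighbour w would have both as powers; but the cyclic group
   <w> has a unique involution.  Conversely closed twins are equal or adjacent. *)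
From mathcomp Require Import all_boot all_fingroup cyclic.
Set Implicit Arguments. Unset Strict Implicit. Unset Printing Implicit Defensive.
Local Open Scope group_scope.

Section Graphs.
Variables (T : Type) (V : T -> Prop) (adj : T -> T -> Prop).

Lemma open_twins_sym (x y : T) : open_twins V adj x y -> open_twins V adj y x.
Proof. by move=> Oxy z Vz; apply: iff_sym; apply: Oxy. Qed.

Lemma open_twins_nonadj (x y : T) :
  (forall z, ~ adj z z) -> V y -> open_twins V adj x y -> ~ adj x y.
Proof. by move=> irr Vy Oxy /(Oxy y Vy); apply: irr. Qed.

Lemma walk_first_edge (x y : T) : walk V adj x y -> x <> y -> exists w, adj x w.
Proof. by case=> [z _ //|u w z Auw _ _]; exists w. Qed.

Lemma closed_twins_joined (x y : T) :
  V x -> V y -> closed_twins V adj x y -> joined V adj x y.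
Proof.
move=> Vx Vy Cxy; split=> //.
have [<-|Axy] := proj2 (Cxy y Vy) (or_introl erefl); first exact: walk_nil.
exact: walk_cons Axy (walk_nil _ Vy).
Qed.

End Graphs.

Section PowerGraph.
Variable gT : finGroupType.
Implicit Types w x y : gT.

Lemma pos_expgP x y :
  y <> 1 -> (exists n, (0 < n)%N /\ y = x ^+ n) <-> y \in <[x]>.
Proof.
move=> y1; split=> [[n [_ ->]]|/cycleP[[|n] yE]]; first exact: mem_cycle.
  by rewrite yE expg0 in y1.
by exists n.+1.
Qed.

Lemma pstar_adjE x y :
  pstar_adj x y <-> [/\ x <> 1, y <> 1, x <> y & y \in <[x]> \/ x \in <[y]>].
Proof.
rewrite /pstar_adj /power_adj /pstar_vertex.
split=> [[x1 [y1 [nxy Pxy]]]|[x1 y1 nxy Pxy]]; [split=> // | do 3!split=> //];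
  have := pos_expgP x y1; have := pos_expgP y x1; tauto.
Qed.

Lemma pstar_adj_irrefl x : ~ pstar_adj x x.
Proof. by case/pstar_adjE. Qed.

Lemma invg_id_order2 x : x <> 1 -> x^-1 = x -> #[x] = 2.
Proof.
move=> x1 xVx; apply/prime_nt_dvdP; rewrite ?order_eq1; try exact/eqP.
by rewrite order_dvdn expgS expg1 -{1}xVx mulVg.
Qed.

Lemma eq_order2_cycle w x y :
  x \in <[w]> -> y \in <[w]> -> #[x] = 2 -> #[y] = 2 -> x = y.
Proof.
move=> xw yw ox oy.
have /eqP exy : <[x]> == <[y]>.
  by rewrite (eq_subG_cyclic (cycle_cyclic w)) ?cycle_subG // -!orderE ox oy.
have : x \in <[y]> by rewrite -exy cycle_id.
rewrite cycle2g // !inE => /orP[/eqP x1|/eqP //].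
by move: ox; rewrite x1 order1.
Qed.

Lemma order2_pstar_adj x w : #[x] = 2 -> pstar_adj x w -> x \in <[w]>.
Proof.
move=> ox /pstar_adjE[_ w1 nxw [|//]].
by rewrite cycle2g // !inE => /orP[] /eqP // /esym.
Qed.

Let open_twins_pstar := open_twins (@pstar_vertex gT) (@pstar_adj gT).

Lemma open_twins_notin_cycle x y :
  x <> 1 -> y <> 1 -> x <> y -> open_twins_pstar x y -> y \notin <[x]>.
Proof.
move=> x1 y1 nxy Oxy; apply/negP => yx.
apply: (open_twins_nonadj (@pstar_adj_irrefl) y1 Oxy).
by apply/pstar_adjE; split=> //; left.
Qed.

Lemma open_twins_order2 x y :
  x <> 1 -> y <> 1 -> x <> y -> open_twins_pstar x y -> #[x] = 2.
Proof.
move=> x1 y1 nxy Oxy; apply: invg_id_order2 => //.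
apply/eqP/negPn/negP => /eqP nxVx.
have xV1 : x^-1 <> 1 by move/eqP; rewrite invg_eq1 => /eqP.
have /(Oxy _ xV1) /pstar_adjE[_ _ _ []] : pstar_adj x x^-1.
  apply/pstar_adjE; split=> //; first exact: nesym nxVx.
  by left; rewrite groupV cycle_id.
- rewrite groupV; apply/negP.
  exact: open_twins_notin_cycle y1 x1 (nesym nxy) (open_twins_sym Oxy).
- by rewrite cycleV; apply/negP; apply: open_twins_notin_cycle Oxy.
Qed.

Lemma open_twins_pstar_isolated x y w :
  x <> 1 -> y <> 1 -> x <> y -> open_twins_pstar x y -> ~ pstar_adj x w.
Proof.
move=> x1 y1 nxy Oxy Axw.
have Oyx := open_twins_sym Oxy.
have ox := open_twins_order2 x1 y1 nxy Oxy.
have oy := open_twins_order2 y1 x1 (nesym nxy) Oyx.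
have w1 : w <> 1 by case/pstar_adjE: Axw.
have Ayw : pstar_adj y w by apply/(Oxy w w1).
have exy := eq_order2_cycle (order2_pstar_adj ox Axw) (order2_pstar_adj oy Ayw)
  ox oy.
by move: (open_twins_notin_cycle x1 y1 nxy Oxy); rewrite -exy cycle_id.
Qed.

End PowerGraph.

Theorem mainTheorem20 (gT : finGroupType) :
  tame_quotient (@pstar_vertex gT) (@pstar_adj gT)
    (twins (@pstar_vertex gT) (@pstar_adj gT))
  <->
  (forall x y : gT, x <> 1 -> y <> 1 ->
     twins (@pstar_vertex gT) (@pstar_adj gT) x y ->
     closed_twins (@pstar_vertex gT) (@pstar_adj gT) x y).
Proof.
split=> [tame x y x1 y1 [//|Oxy] | closed x y x1 y1 Txy].
- have [<- | /eqP nxy] := eqVneq x y; first by move=> z _; split.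
  have [w Axw] := walk_first_edge (proj2 (tame x y x1 y1 (or_intror Oxy))) nxy.
  by case: (open_twins_pstar_isolated x1 y1 nxy Oxy Axw).
- exact: closed_twins_joined x1 y1 (closed x y x1 y1 Txy).
Qed.
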